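(* Let $\alpha\ge\tfrac12$ and $1\le q<\infty$. Then $\|\widehat{\mathbf{1}_{[0,1)}}\|_{\infty,q}<\infty$ if and only if $q>\frac{2(\alpha+1)}{\alpha+3/2}$. In particular $\widehat{\mathbf{1}_{[0,1)}}\in(L^\infty,\ell^2)(\mathbb{R}_+,*_\alpha)$.
   Context: Haar measure $\omega_\alpha(dz)=z^{2\alpha+1}dz$ on $\mathbb{R}_+$. Characters of the Bessel–Kingman hypergroup: $\chi_\lambda(x)=j_\alpha(\lambda x)$ with $j_\alpha(x)=\sum_{k\ge0}\frac{(-1)^k\Gamma(\alpha+1)}{2^{2k}k!\Gamma(\alpha+k+1)}x^{2k}$. Fourier transform: $\hat f(\lambda)=\int_{\mathbb{R}_+}f(x)\chi_\lambda(x)\,d\omega_\alpha(x)$. Let $I_n=[n-1,n)$, $\omega_n=\omega_\alpha(I_n)$, and $\|g\|_{\infty,q}=\big(\sum_{n\ge1}\omega_n\sup_{\lambda\in I_n}|g(\lambda)|^q\big)^{1/q}$; $(L^\infty,\ell^q)(\mathbb{R}_+,*_\alpha)$ is the space of measurable $g$ with $\|g\|_{\infty,q}<\infty$. *)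

From Stdlib Require Import Reals Lra ClassicalEpsilon Factorial.
Open Scope R_scope.

(* Nonnegative real power with 0^q = 0 (Stdlib's Rpower 0 q = 1). *)
Definition rpow (x q : R) : R :=
  if Rle_dec x 0 then 0 else Rpower x q.

(* Pochhammer: prod_{i=1}^k (a + i) = Gamma(a+k+1)/Gamma(a+1). *)
Fixpoint poch1 (a : R) (k : nat) : R :=
  match k with
  | O => 1
  | S k' => poch1 a k' * (a + INR (S k'))
  end.

(* Coefficient of x^(2k) in j_alpha:
   (-1)^k Gamma(alpha+1) / (2^(2k) k! Gamma(alpha+k+1)). *)
Definition jcoef (alpha : R) (k : nat) : R :=
  (-1) ^ k / (2 ^ (2 * k) * INR (fact k) * poch1 alpha k).

Definition j_alpha (alpha x : R) : R :=
  epsilon (inhabits 0)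
    (fun l => infinite_sum (fun k => jcoef alpha k * x ^ (2 * k)) l).

(* Density of the Haar measure omega_alpha(dz) = z^(2 alpha + 1) dz on R_+. *)
Definition haar_density (alpha z : R) : R := rpow z (2 * alpha + 1).

Definition RInt (f : R -> R) (a b : R) : R :=
  epsilon (inhabits 0)
    (fun l => exists pr : Riemann_integrable f a b, RiemannInt pr = l).

Definition ind01 (x : R) : R :=
  if Rle_dec 0 x then (if Rlt_dec x 1 then 1 else 0) else 0.

(* Fourier transform of 1_[0,1) on the Bessel-Kingman hypergroup:
   hat f(lambda) = int_{R_+} f(x) j_alpha(lambda x) d omega_alpha(x);
   since f vanishes outside [0,1) the integral is over [0,1]. *)
Definition hat_ind01 (alpha lambda : R) : R :=
  RInt (fun x => ind01 x * j_alpha alpha (lambda * x) * haar_density alpha x) 0 1.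

Definition omega_n (alpha : R) (n : nat) : R :=
  RInt (haar_density alpha) (INR n - 1) (INR n).

Definition sup_set (g : R -> R) (q : R) (n : nat) : R -> Prop :=
  fun y => exists lam, INR n - 1 <= lam < INR n /\ y = rpow (Rabs (g lam)) q.

(* ||g||_{infty,q} < infty : each sup over I_n is finite (attained as a
   least upper bound M n) and sum_{n>=1} omega_n M n converges. *)
Definition finite_Linf_lq (alpha q : R) (g : R -> R) : Prop :=
  exists M : nat -> R,
    (forall n, (1 <= n)%nat -> is_lub (sup_set g q n) (M n)) /\
    exists l, infinite_sum (fun k => omega_n alpha (S k) * M (S k)) l.

(* Differentiating [x^(2 alpha + 2) j_(alpha+1) (lam x)] shows that the transform equals
   [j_(alpha+1) lam / (2 alpha + 2)].  In Liouville form [U t = t^(nu + 1/2) j_nu t],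
   [V t = - t^(nu + 1/2) j_nu' t], Bessel's equation is a perturbed harmonic oscillator; a
   modified energy of it has logarithmic derivative [O(1/t^2)], so [U] stays bounded while
   [U^2 + V^2] stays away from 0, which forces [|U|] above a fixed constant somewhere in every
   interval of length [3/4].  Hence the supremum of [|hat|^q] over [I_n] has exact order
   [n^(-(alpha + 3/2) q)], while [omega_n] has order [n^(2 alpha + 1)]: the norm is a
   [p]-series with [p = (alpha + 3/2) q - (2 alpha + 1)], finite iff [p > 1]. *)

From Pilot Require Import Defs.
From Stdlib Require Import Reals Lra Lia ZArith Classical ClassicalEpsilon FunctionalExtensionality.
From Coquelicot Require Import Coquelicot.
Open Scope R_scope.

Lemma is_derive_eq (f : R -> R) (x l l' : R) : is_derive f x l -> l = l' -> is_derive f x l'.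
Proof. intros H <-; exact H. Qed.

Lemma is_derive_mult_R (f g : R -> R) (x df dg : R) : is_derive f x df -> is_derive g x dg ->
  is_derive (fun t => f t * g t) x (df * g x + f x * dg).
Proof. intros Hf Hg. apply (is_derive_mult f g x df dg Hf Hg). intros; apply Rmult_comm. Qed.

Lemma is_derive_comp_R (f g : R -> R) (x df dg : R) : is_derive f (g x) df -> is_derive g x dg ->
  is_derive (fun t => f (g t)) x (dg * df).
Proof. intros Hf Hg. apply (is_derive_comp f g x df dg Hf Hg). Qed.

Lemma is_derive_sqr (f : R -> R) (x df : R) : is_derive f x df ->
  is_derive (fun t => f t ^ 2) x (2 * f x * df).
Proof.
  intros Hf. eapply is_derive_eq; [apply (is_derive_comp_R (fun u => u ^ 2) f); [|exact Hf]|].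
  - auto_derive; [exact I | reflexivity].
  - ring.
Qed.

Lemma is_derive_Rpower p t : 0 < t -> is_derive (fun s => Rpower s p) t (p * Rpower t p / t).
Proof.
  intros Ht. eapply is_derive_eq; [apply is_derive_Reals, derivable_pt_lim_power, Ht|].
  unfold Rminus. rewrite Rpower_plus, Rpower_Ropp, Rpower_1 by exact Ht. field; lra.
Qed.

Lemma derive_nonpos_le (f df : R -> R) a b : a <= b ->
  (forall c, a <= c <= b -> is_derive f c (df c)) ->
  (forall c, a <= c <= b -> df c <= 0) -> f b <= f a.
Proof.
  intros Hab Hd Hs. destruct (Req_dec a b) as [<-|Hne]; [lra|].
  destruct (MVT_cor2 f df a b) as [c [E Hc]]; [lra| intros; apply is_derive_Reals, Hd; lra|].
  specialize (Hs c ltac:(lra)). nra.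
Qed.

Lemma derive_nonneg_le (f df : R -> R) a b : a <= b ->
  (forall c, a <= c <= b -> is_derive f c (df c)) ->
  (forall c, a <= c <= b -> 0 <= df c) -> f a <= f b.
Proof.
  intros Hab Hd Hs.
  enough (- f b <= - f a) by lra.
  apply (derive_nonpos_le (fun t => - f t) (fun t => - df t)); [exact Hab| |].
  - intros c Hc; apply (is_derive_opp f), Hd, Hc.
  - intros c Hc; specialize (Hs c Hc); lra.
Qed.

Lemma exp_ge_1 x : 0 <= x -> 1 <= exp x.
Proof. intros Hx. pose proof (exp_ineq1_le x). lra. Qed.

Lemma exp_le_1 x : x <= 0 -> exp x <= 1.
Proof.
  intros Hx. rewrite <- exp_0.
  destruct (Req_dec x 0) as [->|Hx0]; [lra | left; apply exp_increasing; lra].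
Qed.

Lemma bounded_of_derive_le_inv_sq (f df : R -> R) (a k : R) : 0 < a -> 0 <= k ->
  (forall t, a <= t -> is_derive f t (df t)) ->
  (forall t, a <= t -> 0 <= f t) ->
  (forall t, a <= t -> Rabs (df t) <= k * f t / t ^ 2) ->
  forall t, a <= t -> f a * exp (- (k / a)) <= f t <= f a * exp (k / a).
Proof.
  intros Ha Hk Hd Hf Hb t Ht.
  assert (Hsign : forall s, a <= s -> - (k * f s / s ^ 2) <= df s <= k * f s / s ^ 2).
  { intros s Hs; specialize (Hb s Hs); apply Rabs_le_between in Hb; lra. }
  assert (Hkt : 0 <= k / t) by (apply Rdiv_le_0_compat; lra).
  split.
  - apply Rle_trans with (f t * exp (- (k / t))).
    + apply (derive_nonneg_le (fun s => f s * exp (- (k / s)))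
        (fun s => exp (- (k / s)) * (df s + k * f s / s ^ 2)) a t Ht).
      * intros c Hc. eapply is_derive_eq.
        -- apply is_derive_mult_R; [apply Hd; lra | auto_derive; [lra | reflexivity]].
        -- unfold Rdiv; field; lra.
      * intros c Hc. specialize (Hsign c ltac:(lra)).
        apply Rmult_le_pos; [left; apply exp_pos | lra].
    + rewrite <- (Rmult_1_r (f t)) at 2.
      apply Rmult_le_compat_l; [apply Hf, Ht | apply exp_le_1; lra].
  - apply Rle_trans with (f t * exp (k / t)).
    + rewrite <- (Rmult_1_r (f t)) at 1.
      apply Rmult_le_compat_l; [apply Hf, Ht | apply exp_ge_1; lra].
    + apply (derive_nonpos_le (fun s => f s * exp (k / s))
        (fun s => exp (k / s) * (df s - k * f s / s ^ 2)) a t Ht).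
      * intros c Hc. eapply is_derive_eq.
        -- apply is_derive_mult_R; [apply Hd; lra | auto_derive; [lra | reflexivity]].
        -- unfold Rdiv; field; lra.
      * intros c Hc. specialize (Hsign c ltac:(lra)).
        pose proof (exp_pos (k / c)). nra.
Qed.

Lemma exists_nat_ge (x : R) : exists N, (2 <= N)%nat /\ x <= INR N.
Proof.
  destruct (archimed (Rmax x 0)) as [Hup _].
  assert (Hz : (0 <= up (Rmax x 0))%Z) by (apply le_IZR; pose proof (Rmax_r x 0); lra).
  exists (Nat.max 2 (Z.to_nat (up (Rmax x 0)))). split; [apply Nat.le_max_l|].
  apply Rle_trans with (INR (Z.to_nat (up (Rmax x 0)))).
  - rewrite INR_IZR_INZ, Z2Nat.id by exact Hz. pose proof (Rmax_l x 0). lra.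
  - apply le_INR, Nat.le_max_r.
Qed.

Lemma Rpower_half_neg x e : 0 < x -> Rpower (x / 2) (- e) = Rpower 2 e * Rpower x (- e).
Proof.
  intros Hx. unfold Rdiv. rewrite <- Rpower_mult_distr by (try apply Rinv_0_lt_compat; lra).
  unfold Rpower. rewrite ln_Rinv by lra. replace (- e * - ln 2) with (e * ln 2) by ring. ring.
Qed.

Lemma rpow_pos_eq x s : 0 < x -> rpow x s = Rpower x s.
Proof. intros Hx. unfold rpow. destruct (Rle_dec x 0); [lra | reflexivity]. Qed.

Lemma rpow_nonpos x s : x <= 0 -> rpow x s = 0.
Proof. intros Hx. unfold rpow. destruct (Rle_dec x 0); [reflexivity | lra]. Qed.

Lemma rpow_ge0 x s : 0 <= rpow x s.
Proof. unfold rpow. destruct (Rle_dec x 0); [lra | left; apply exp_pos]. Qed.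

Lemma rpow_1 s : rpow 1 s = 1.
Proof. rewrite rpow_pos_eq by lra. unfold Rpower. rewrite ln_1, Rmult_0_r. apply exp_0. Qed.

Lemma rpow_le_compat x y s : 0 <= x <= y -> 0 <= s -> rpow x s <= rpow y s.
Proof.
  intros Hxy Hs. destruct (Rle_lt_dec x 0) as [Hx|Hx].
  - rewrite (rpow_nonpos x) by exact Hx. apply rpow_ge0.
  - rewrite !rpow_pos_eq by lra. apply Rle_Rpower_l; lra.
Qed.

Lemma rpow_pred x s : 0 <= x -> rpow x s = x * rpow x (s - 1).
Proof.
  intros Hx. destruct (Req_dec x 0) as [->|Hx0]; [rewrite !rpow_nonpos by lra; ring|].
  rewrite !rpow_pos_eq by lra. replace s with (1 + (s - 1)) at 1 by ring.
  rewrite Rpower_plus, Rpower_1; lra.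
Qed.

Lemma rpow_mult_Rpower c x e q : 0 < c -> 0 < x ->
  rpow (c * Rpower x e) q = Rpower c q * Rpower x (e * q).
Proof.
  intros Hc Hx. rewrite rpow_pos_eq by (apply Rmult_lt_0_compat; [exact Hc | apply exp_pos]).
  rewrite <- Rpower_mult_distr, Rpower_mult by (try exact Hc; apply exp_pos). reflexivity.
Qed.

Lemma rpow_le_sqr h s : 2 <= s -> Rabs h <= 1 -> rpow h s <= h ^ 2.
Proof.
  intros Hs Hh. destruct (Rle_lt_dec h 0) as [Hh0|Hh0].
  - rewrite rpow_nonpos by exact Hh0. apply pow2_ge_0.
  - rewrite Rabs_pos_eq in Hh by lra. rewrite rpow_pos_eq by exact Hh0.
    replace s with (INR 2 + (s - 2)) by (simpl; ring).
    rewrite Rpower_plus, Rpower_pow by exact Hh0.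
    assert (Hle1 : Rpower h (s - 2) <= Rpower 1 (s - 2)) by (apply Rle_Rpower_l; lra).
    unfold Rpower at 2 in Hle1; rewrite ln_1, Rmult_0_r, exp_0 in Hle1.
    pose proof (pow2_ge_0 h). rewrite <- (Rmult_1_r (h ^ 2)) at 2.
    apply Rmult_le_compat_l; lra.
Qed.

Lemma is_derive_rpow s x : 2 <= s -> 0 <= x -> is_derive (fun t => rpow t s) x (s * rpow x (s - 1)).
Proof.
  intros Hs Hx. apply is_derive_Reals. destruct (Req_dec x 0) as [->|Hx0].
  - rewrite (rpow_nonpos 0), Rmult_0_r by lra.
    intros eps Heps. exists (mkposreal (Rmin eps 1) ltac:(apply Rmin_glb_lt; lra)).
    intros h Hh Hd; simpl in Hd.
    pose proof (Rmin_l eps 1); pose proof (Rmin_r eps 1).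
    rewrite Rplus_0_l, (rpow_nonpos 0), !Rminus_0_r by lra.
    pose proof (rpow_le_sqr h s Hs ltac:(lra)) as Hsq. pose proof (rpow_ge0 h s).
    rewrite Rabs_div by exact Hh. rewrite (Rabs_pos_eq (rpow h s)) by lra.
    apply Rmult_lt_reg_r with (Rabs h); [apply Rabs_pos_lt, Hh|].
    unfold Rdiv; rewrite Rmult_assoc, Rinv_l by (apply Rabs_no_R0, Hh).
    rewrite <- (Rabs_pos_eq (h ^ 2)), <- RPow_abs in Hsq by apply pow2_ge_0.
    assert (0 < Rabs h) by (apply Rabs_pos_lt, Hh).
    assert (Rabs h ^ 2 < eps * Rabs h) by (simpl; rewrite Rmult_1_r; apply Rmult_lt_compat_r; lra).
    lra.
  - apply (derivable_pt_lim_locally_ext (fun t => Rpower t s) _ x 0 (x + 1)); [lra| |].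
    + intros z Hz. rewrite rpow_pos_eq; lra.
    + rewrite rpow_pos_eq by lra. apply derivable_pt_lim_power; lra.
Qed.

Lemma continuous_rpow s x : 2 <= s -> 0 <= x -> continuous (fun t => rpow t s) x.
Proof.
  intros Hs Hx. apply (ex_derive_continuous (fun t => rpow t s)).
  eexists; apply is_derive_rpow; assumption.
Qed.

Lemma RInt_of_is_RInt f a b v : is_RInt f a b v -> Defs.RInt f a b = v.
Proof.
  intros Hv. assert (Hp : Riemann_integrable f a b) by (apply ex_RInt_Reals_0; exists v; exact Hv).
  unfold Defs.RInt.
  destruct (epsilon_spec (inhabits 0) (fun l => exists pr : Riemann_integrable f a b, RiemannInt pr = l))
    as [pr <-]; [exists (RiemannInt Hp), Hp; reflexivity|].
  rewrite <- RInt_Reals. apply is_RInt_unique, Hv.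
Qed.

Lemma ex_series_of_sum_bounded (a : nat -> R) (M : R) :
  (forall n, 0 <= a n) -> (forall n, sum_f_R0 a n <= M) -> ex_series a.
Proof.
  intros Ha HM. destruct (growing_cv (sum_f_R0 a)) as [l Hl].
  - intros n; simpl; specialize (Ha (S n)); lra.
  - exists M; intros x [n ->]; apply HM.
  - exists l; apply is_series_Reals, Hl.
Qed.

Lemma Rpower_neg_le_diff s x : 1 < s -> 0 < x ->
  Rpower (x + 1) (- s) <= (Rpower x (1 - s) - Rpower (x + 1) (1 - s)) / (s - 1).
Proof.
  intros Hs Hx.
  destruct (MVT_cor2 (fun t => Rpower t (1 - s)) (fun t => (1 - s) * Rpower t (1 - s - 1)) x (x + 1))
    as [c [Hc Hcx]]; [lra | intros c Hc; apply derivable_pt_lim_power; lra|].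
  replace (1 - s - 1) with (- s) in Hc by ring.
  replace (Rpower x (1 - s) - Rpower (x + 1) (1 - s)) with ((s - 1) * Rpower c (- s))
    by (replace (x + 1 - x) with 1 in Hc by ring; lra).
  replace ((s - 1) * Rpower c (- s) / (s - 1)) with (Rpower c (- s)) by (field; lra).
  rewrite !Rpower_Ropp. apply Rinv_le_contravar; [apply exp_pos | apply Rle_Rpower_l; lra].
Qed.

Lemma ex_series_Rpower_neg s : 1 < s -> ex_series (fun k => Rpower (INR k + 1) (- s)).
Proof.
  intros Hs. apply (ex_series_of_sum_bounded _ (1 + 1 / (s - 1))); [intros; left; apply exp_pos|].
  intros n. apply Rle_trans with (1 + (1 - Rpower (INR n + 1) (1 - s)) / (s - 1)).
  - induction n as [|n IH].
    + simpl. replace (0 + 1) with 1 by ring. unfold Rpower. rewrite ln_1, !Rmult_0_r, exp_0.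
      replace ((1 - 1) / (s - 1)) with 0 by (field; lra). lra.
    + rewrite tech5, S_INR. pose proof (pos_INR n).
      pose proof (Rpower_neg_le_diff s (INR n + 1) Hs ltac:(lra)).
      assert ((1 - Rpower (INR n + 1) (1 - s)) / (s - 1)
              + (Rpower (INR n + 1) (1 - s) - Rpower (INR n + 1 + 1) (1 - s)) / (s - 1)
              = (1 - Rpower (INR n + 1 + 1) (1 - s)) / (s - 1)) by (field; lra).
      lra.
  - assert (0 <= Rpower (INR n + 1) (1 - s) / (s - 1)).
    { apply Rdiv_le_0_compat; [left; apply exp_pos | lra]. }
    unfold Rdiv in *; rewrite Rmult_minus_distr_r. lra.
Qed.

Lemma ln_le_harmonic_sum n : ln (INR n + 2) <= sum_f_R0 (fun k => / (INR k + 1)) n.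
Proof.
  assert (Hln : forall x, 0 < x -> ln (1 + x) <= x).
  { intros x Hx. rewrite <- (ln_exp x) at 2. apply ln_le; [lra | apply exp_ineq1_le]. }
  induction n as [|n IH].
  - simpl. replace (0 + 2) with (1 + 1) by ring. rewrite Rplus_0_l, Rinv_1. apply Hln; lra.
  - rewrite tech5, S_INR. pose proof (pos_INR n).
    replace (INR n + 1 + 2) with ((INR n + 2) * (1 + / (INR n + 2))) by (field; lra).
    assert (Hinv : 0 < / (INR n + 2)) by (apply Rinv_0_lt_compat; lra).
    rewrite ln_mult by lra.
    replace (INR n + 1 + 1) with (INR n + 2) by ring.
    pose proof (Hln _ Hinv). lra.
Qed.

Lemma harmonic_not_ex_series : ~ ex_series (fun k => / (INR k + 1)).
Proof.
  intros [l Hl]. apply is_series_Reals, is_lim_seq_Reals in Hl.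
  assert (Hln : is_lim_seq (fun n => ln (INR n + 2)) p_infty).
  { apply (filterlim_comp _ _ _ (fun n => INR n + 2) ln _ (Rbar_locally p_infty)); [|exact is_lim_ln_p].
    eapply is_lim_seq_plus; [apply is_lim_seq_INR | apply is_lim_seq_const | reflexivity]. }
  exact (is_lim_seq_le _ _ _ _ ln_le_harmonic_sum Hln Hl).
Qed.

(** * The Bessel series *)

Lemma poch1_pos nu k : 0 <= nu -> 0 < poch1 nu k.
Proof.
  intros Hnu; induction k as [|k IH]; cbn -[INR]; [lra|].
  apply Rmult_lt_0_compat; [exact IH|]. rewrite S_INR; pose proof (pos_INR k); lra.
Qed.

Lemma poch1_succ nu k : poch1 nu (S k) = (nu + 1) * poch1 (nu + 1) k.
Proof.
  induction k as [|k IH]; [simpl; ring|].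
  change (poch1 nu (S k) * (nu + INR (S (S k))) = (nu + 1) * (poch1 (nu + 1) k * (nu + 1 + INR (S k)))).
  rewrite IH, (S_INR (S k)); ring.
Qed.

Lemma jcoef_0 nu : jcoef nu 0 = 1.
Proof. unfold jcoef; simpl; lra. Qed.

Lemma jcoef_neq0 nu k : 0 <= nu -> jcoef nu k <> 0.
Proof.
  intros Hnu; unfold jcoef. pose proof (poch1_pos nu k Hnu). pose proof (INR_fact_neq_0 k).
  assert (2 ^ (2 * k) <> 0) by (apply pow_nonzero; lra).
  apply Rmult_integral_contrapositive_currified; [apply pow_nonzero; lra|].
  apply Rinv_neq_0_compat; repeat apply Rmult_integral_contrapositive_currified; lra.
Qed.

Lemma jcoef_succ nu k : 0 <= nu ->
  jcoef nu (S k) = - jcoef nu k / (4 * INR (S k) * (nu + INR (S k))).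
Proof.
  intros Hnu; unfold jcoef. pose proof (poch1_pos nu k Hnu).
  pose proof (pos_INR k). pose proof (INR_fact_neq_0 k).
  replace (2 * S k)%nat with (S (S (2 * k))) by lia.
  rewrite fact_simpl, mult_INR; cbn -[INR fact]; rewrite !S_INR.
  field; repeat split; try lra. apply pow_nonzero; lra.
Qed.

Lemma jcoef_shift nu k : 0 <= nu ->
  jcoef (nu + 1) k = jcoef nu k * (nu + 1) / (nu + INR (S k)).
Proof.
  intros Hnu; unfold jcoef. pose proof (poch1_pos (nu + 1) k ltac:(lra)).
  pose proof (pos_INR k). pose proof (INR_fact_neq_0 k).
  assert (E : poch1 nu k = (nu + 1) * poch1 (nu + 1) k / (nu + INR (S k))).
  { rewrite <- poch1_succ; cbn -[INR]; rewrite S_INR; field; lra. }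
  rewrite E, S_INR; field; repeat split; try lra. apply pow_nonzero; lra.
Qed.

Lemma CV_radius_jcoef nu : 0 <= nu -> CV_radius (jcoef nu) = p_infty.
Proof.
  intros Hnu. apply CV_radius_infinite_DAlembert; [intros; apply jcoef_neq0; exact Hnu|].
  apply is_lim_seq_le_le with (fun _ => 0) (fun n => / (INR n + 1)).
  - intros n. rewrite jcoef_succ by exact Hnu. pose proof (jcoef_neq0 nu n Hnu).
    pose proof (pos_INR n). rewrite S_INR.
    replace (- jcoef nu n / (4 * (INR n + 1) * (nu + (INR n + 1))) / jcoef nu n)
      with (- / (4 * (INR n + 1) * (nu + (INR n + 1)))) by (field; lra).
    rewrite Rabs_Ropp, Rabs_pos_eq by (left; apply Rinv_0_lt_compat; nra).
    split; [left; apply Rinv_0_lt_compat; nra|]. apply Rinv_le_contravar; nra.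
  - apply is_lim_seq_const.
  - replace (Finite 0) with (Rbar_inv p_infty) by reflexivity.
    apply is_lim_seq_inv; [|discriminate].
    eapply is_lim_seq_plus; [apply is_lim_seq_INR|apply is_lim_seq_const|reflexivity].
Qed.

(* [jser nu (x^2) = j_nu x]: in the variable [y = x^2] the series is a power series. *)
Definition jser (nu y : R) : R := PSeries (jcoef nu) y.

Lemma ex_pseries_jcoef nu y : 0 <= nu -> ex_pseries (jcoef nu) y.
Proof. intros Hnu. apply CV_radius_inside. rewrite CV_radius_jcoef by exact Hnu. exact I. Qed.

Lemma j_alpha_jser nu x : 0 <= nu -> j_alpha nu x = jser nu (x ^ 2).
Proof.
  intros Hnu. set (u := fun k => jcoef nu k * x ^ (2 * k)).
  assert (Hs : infinite_sum u (jser nu (x ^ 2))).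
  { apply is_series_Reals.
    eapply is_series_ext; [|apply (PSeries_correct _ _ (ex_pseries_jcoef nu (x ^ 2) Hnu))].
    intros k; unfold u; change (scal ?c ?a) with (c * a).
    rewrite pow_n_pow, pow_mult; apply Rmult_comm. }
  unfold j_alpha; fold u.
  apply (uniqueness_sum u); [|exact Hs].
  apply (epsilon_spec (inhabits 0) (infinite_sum u)); eauto.
Qed.

Lemma jser_0 nu : jser nu 0 = 1.
Proof. unfold jser; rewrite PSeries_0; apply jcoef_0. Qed.

Lemma continuous_jser nu y : 0 <= nu -> continuous (jser nu) y.
Proof.
  intros Hnu. apply continuity_pt_filterlim, PSeries_continuity.
  rewrite CV_radius_jcoef by exact Hnu; exact I.
Qed.

Lemma is_derive_jser nu y : 0 <= nu ->
  is_derive (jser nu) y (- jser (nu + 1) y / (4 * (nu + 1))).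
Proof.
  intros Hnu.
  assert (E : PS_derive (jcoef nu) = PS_scal (- / (4 * (nu + 1))) (jcoef (nu + 1))).
  { apply functional_extensionality; intros n.
    unfold PS_derive, PS_scal; change (scal ?c ?a) with (c * a).
    rewrite jcoef_succ, jcoef_shift by exact Hnu. pose proof (pos_INR n).
    rewrite !S_INR; field; lra. }
  replace (- jser (nu + 1) y / (4 * (nu + 1))) with (PSeries (PS_derive (jcoef nu)) y).
  - apply is_derive_PSeries. rewrite CV_radius_jcoef by exact Hnu; exact I.
  - rewrite E, PSeries_scal; change (scal ?c ?a) with (c * a); unfold jser, Rdiv; ring.
Qed.

Lemma jser_succ_sub nu y : 0 <= nu ->
  jser (nu + 1) y - jser nu y = y / (4 * (nu + 1) * (nu + 2)) * jser (nu + 2) y.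
Proof.
  intros Hnu. unfold jser.
  rewrite <- PSeries_minus by (apply ex_pseries_jcoef; lra).
  replace (y / (4 * (nu + 1) * (nu + 2)) * PSeries (jcoef (nu + 2)) y)
    with (y * PSeries (PS_scal (/ (4 * (nu + 1) * (nu + 2))) (jcoef (nu + 2))) y)
    by (rewrite PSeries_scal; change (scal ?c ?a) with (c * a); field; lra).
  rewrite <- PSeries_incr_1. apply PSeries_ext; intros [|j].
  - cbn -[jcoef]. rewrite !jcoef_0. apply Rplus_opp_r.
  - unfold PS_minus, PS_incr_1, PS_scal.
    change (scal ?c ?a) with (c * a); change (plus ?a (opp ?b)) with (a - b).
    replace (nu + 2) with (nu + 1 + 1) by ring.
    rewrite (jcoef_succ (nu + 1)), (jcoef_succ nu), (jcoef_shift (nu + 1)), !(jcoef_shift nu j) by lra.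
    pose proof (pos_INR j). rewrite !S_INR; field; repeat split; lra.
Qed.

Section Bessel_energy.

Variable nu : R.
Hypothesis nu_ge0 : 0 <= nu.

(* [jA = j_nu] and [jB = - j_nu']. *)
Definition jA (x : R) : R := jser nu (x ^ 2).

Definition jB (x : R) : R := x * jser (nu + 1) (x ^ 2) / (2 * (nu + 1)).

Definition energy (x : R) : R := jA x ^ 2 + jB x ^ 2.

Lemma is_derive_jA x : is_derive jA x (- jB x).
Proof.
  eapply is_derive_eq.
  - apply (is_derive_comp_R (jser nu) (fun t => t ^ 2)); [apply is_derive_jser, nu_ge0|].
    auto_derive; [exact I | reflexivity].
  - unfold jB; field; lra.
Qed.

Lemma is_derive_jB x :
  is_derive jB x (jA x - (2 * nu + 1) / (2 * (nu + 1)) * jser (nu + 1) (x ^ 2)).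
Proof.
  assert (D : is_derive (fun t => jser (nu + 1) (t ^ 2)) x
                (2 * x * (- jser (nu + 1 + 1) (x ^ 2) / (4 * (nu + 1 + 1))))).
  { apply (is_derive_comp_R (jser (nu + 1)) (fun t => t ^ 2)); [apply is_derive_jser; lra|].
    auto_derive; [exact I | ring]. }
  eapply is_derive_eq.
  - unfold jB. apply (is_derive_mult_R (fun t => t * jser (nu + 1) (t ^ 2)) (fun _ => / (2 * (nu + 1)))).
    + apply (is_derive_mult_R (fun t => t)); [apply (is_derive_id x) | exact D].
    + apply is_derive_const.
  - pose proof (jser_succ_sub nu (x ^ 2) nu_ge0) as Rec. unfold jA.
    replace (nu + 1 + 1) with (nu + 2) by ring.
    replace (jser nu (x ^ 2)) with (jser (nu + 1) (x ^ 2)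
       - x ^ 2 / (4 * (nu + 1) * (nu + 2)) * jser (nu + 2) (x ^ 2)) by lra.
    change (@one _) with 1; change (@zero _) with 0. field; lra.
Qed.

Lemma is_derive_energy x :
  is_derive energy x (- (2 * nu + 1) * x * jser (nu + 1) (x ^ 2) ^ 2 / (2 * (nu + 1) ^ 2)).
Proof.
  eapply is_derive_eq.
  - apply (is_derive_plus (fun t => jA t ^ 2) (fun t => jB t ^ 2));
      apply is_derive_sqr; [apply is_derive_jA | apply is_derive_jB].
  - change (plus ?a ?b) with (a + b). unfold jB. field; lra.
Qed.

Lemma energy_0 : energy 0 = 1.
Proof. unfold energy, jA, jB. rewrite !pow_i by lia. rewrite !jser_0. field; lra. Qed.

Lemma energy_le_1 x : 0 <= x -> energy x <= 1.
Proof.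
  intros Hx. rewrite <- energy_0.
  apply (derive_nonpos_le energy
    (fun c => - (2 * nu + 1) * c * jser (nu + 1) (c ^ 2) ^ 2 / (2 * (nu + 1) ^ 2)) 0 x Hx);
    [intros c _; apply is_derive_energy|].
  intros c Hc. assert (0 <= jser (nu + 1) (c ^ 2) ^ 2) by apply pow2_ge_0.
  assert (0 < 2 * (nu + 1) ^ 2) by nra.
  enough (0 <= (2 * nu + 1) * c * jser (nu + 1) (c ^ 2) ^ 2 / (2 * (nu + 1) ^ 2)) by lra.
  apply Rdiv_le_0_compat; [|lra]. apply Rmult_le_pos; [apply Rmult_le_pos|]; lra.
Qed.

(* [energy' x = - (4 nu + 2) jB x ^ 2 / x >= - (4 nu + 2) energy x / x]. *)
Lemma is_derive_weighted_energy x : 0 < x ->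
  is_derive (fun t => energy t * Rpower t (4 * nu + 2)) x
    ((4 * nu + 2) * Rpower x (4 * nu + 2) / x * jA x ^ 2).
Proof.
  intros Hx. eapply is_derive_eq.
  - apply is_derive_mult_R; [apply is_derive_energy | apply is_derive_Rpower, Hx].
  - unfold energy, jB. field; lra.
Qed.

(* The weighted energy is nondecreasing, and [energy] is close to [1] near [0]. *)
Lemma energy_pos x : 0 < x -> 0 < energy x.
Proof.
  intros Hx. destruct (Rle_lt_dec (energy x) 0) as [Hle|]; [exfalso|assumption].
  destruct (proj2 (continuity_pt_filterlim (jser nu) 0) (continuous_jser nu 0 nu_ge0) (1/2))
    as [d [Hd Hc]]; [lra|].
  assert (Ht : exists t, 0 < t /\ t <= x /\ t < d /\ t < 1).
  { exists (Rmin x (Rmin d 1 / 2)). assert (0 < Rmin d 1) by (apply Rmin_glb_lt; lra).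
    pose proof (Rmin_l x (Rmin d 1 / 2)); pose proof (Rmin_r x (Rmin d 1 / 2)).
    pose proof (Rmin_l d 1); pose proof (Rmin_r d 1).
    assert (0 < Rmin x (Rmin d 1 / 2)) by (apply Rmin_glb_lt; lra). lra. }
  destruct Ht as [t Ht].
  assert (HA : 1 / 2 < jA t).
  { unfold jA. assert (Ht2 : 0 < t ^ 2 < d) by nra.
    specialize (Hc (t ^ 2)). rewrite jser_0 in Hc. unfold R_dist in Hc.
    assert (Hclose : Rabs (jser nu (t ^ 2) - 1) < 1 / 2).
    { apply Hc. split; [split; [exact I | lra] |].
      change (Rabs (t ^ 2 - 0) < d). rewrite Rminus_0_r, Rabs_pos_eq; lra. }
    apply Rabs_def2 in Hclose; lra. }
  assert (Hmono : energy t * Rpower t (4 * nu + 2) <= energy x * Rpower x (4 * nu + 2)).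
  { apply (derive_nonneg_le (fun c => energy c * Rpower c (4 * nu + 2))
      (fun c => (4 * nu + 2) * Rpower c (4 * nu + 2) / c * jA c ^ 2) t x);
      [lra | intros c Hc'; apply is_derive_weighted_energy; lra |].
    intros c Hc'. pose proof (exp_pos ((4 * nu + 2) * ln c)). unfold Rpower.
    apply Rmult_le_pos; [apply Rdiv_le_0_compat; [apply Rmult_le_pos|]|apply pow2_ge_0]; lra. }
  assert (energy x * Rpower x (4 * nu + 2) <= 0).
  { apply Rmult_le_0_r; [exact Hle | left; apply exp_pos]. }
  assert (0 < energy t * Rpower t (4 * nu + 2)).
  { apply Rmult_lt_0_compat; [|apply exp_pos]. unfold energy. pose proof (pow2_ge_0 (jB t)). nra. }
  lra.
Qed.

End Bessel_energy.

Lemma jser_abs_le_1 nu y : 0 <= nu -> 0 <= y -> Rabs (jser nu y) <= 1.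
Proof.
  intros Hnu Hy. pose proof (energy_le_1 nu Hnu (sqrt y) (sqrt_pos y)) as E.
  unfold energy, jA in E. rewrite pow2_sqrt in E by exact Hy.
  pose proof (pow2_ge_0 (jB nu (sqrt y))). apply Rabs_le; nra.
Qed.

(** * Large-argument behaviour *)

Section Liouville_form.

Variable nu : R.
Hypothesis nu_ge0 : 0 <= nu.

(* [lU t = t^(nu+1/2) j_nu t] solves [U'' + (1 - (nu^2 - 1/4) / t^2) U = 0]. *)
Definition lU (t : R) : R := Rpower t (nu + 1 / 2) * jA nu t.

Definition lV (t : R) : R := Rpower t (nu + 1 / 2) * jB nu t.

Definition lQ (t : R) : R := lU t ^ 2 + lV t ^ 2 - (2 * nu + 1) / t * (lU t * lV t).

Lemma is_derive_lU t : 0 < t -> is_derive lU t ((nu + 1 / 2) * lU t / t - lV t).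
Proof.
  intros Ht. eapply is_derive_eq.
  - apply is_derive_mult_R; [apply is_derive_Rpower, Ht | apply is_derive_jA, nu_ge0].
  - unfold lU, lV; field; lra.
Qed.

Lemma is_derive_lV t : 0 < t -> is_derive lV t (lU t - (nu + 1 / 2) * lV t / t).
Proof.
  intros Ht. eapply is_derive_eq.
  - apply is_derive_mult_R; [apply is_derive_Rpower, Ht | apply is_derive_jB, nu_ge0].
  - unfold lU, lV, jB; field; lra.
Qed.

Lemma is_derive_lQ t : 0 < t -> is_derive lQ t ((2 * nu + 1) * lU t * lV t / t ^ 2).
Proof.
  intros Ht. eapply is_derive_eq.
  - apply (is_derive_minus (fun s => lU s ^ 2 + lV s ^ 2)
                           (fun s => (2 * nu + 1) / s * (lU s * lV s))).
    + apply (is_derive_plus (fun s => lU s ^ 2) (fun s => lV s ^ 2));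
        apply is_derive_sqr; [apply is_derive_lU | apply is_derive_lV]; exact Ht.
    + apply is_derive_mult_R; [auto_derive; [lra | reflexivity] |].
      apply is_derive_mult_R; [apply is_derive_lU | apply is_derive_lV]; exact Ht.
  - change (minus (plus ?a ?b) ?c) with (a + b - c). unfold Rdiv; field; lra.
Qed.

Lemma lQ_bounds t : 2 * nu + 1 <= t ->
  Rabs (lU t * lV t) <= (lU t ^ 2 + lV t ^ 2) / 2 /\
  (lU t ^ 2 + lV t ^ 2) / 2 <= lQ t <= 3 * (lU t ^ 2 + lV t ^ 2) / 2.
Proof.
  intros Ht. unfold lQ. set (U := lU t). set (V := lV t). set (a := (2 * nu + 1) / t).
  assert (Ha : 0 < a <= 1).
  { unfold a; split; [apply Rdiv_lt_0_compat; lra|].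
    apply Rmult_le_reg_r with t; [lra|]. field_simplify; lra. }
  assert (HUV : Rabs (U * V) <= (U ^ 2 + V ^ 2) / 2).
  { pose proof (pow2_ge_0 (U - V)); pose proof (pow2_ge_0 (U + V)). apply Rabs_le; split; nra. }
  split; [exact HUV|].
  apply Rabs_le_between in HUV.
  assert (- (U ^ 2 + V ^ 2) / 2 <= a * (U * V) <= (U ^ 2 + V ^ 2) / 2) by nra.
  lra.
Qed.

Lemma lU_lV_energy t : lU t ^ 2 + lV t ^ 2 = Rpower t (2 * nu + 1) * energy nu t.
Proof.
  unfold lU, lV, energy.
  replace (2 * nu + 1) with ((nu + 1 / 2) + (nu + 1 / 2)) by lra.
  rewrite (Rpower_plus (nu + 1 / 2) (nu + 1 / 2) t). ring.
Qed.

Lemma lU_bounded_lUV_bounded_below : exists C c, 0 < c /\ forall t, 2 * nu + 1 <= t ->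
  lU t ^ 2 <= C /\ c <= lU t ^ 2 + lV t ^ 2.
Proof.
  set (a := 2 * nu + 1).
  assert (Ha : 0 < a) by (unfold a; lra).
  assert (Hpos : forall t, a <= t -> 0 <= lQ t).
  { intros t Ht. destruct (lQ_bounds t Ht) as [_ [H _]].
    pose proof (pow2_ge_0 (lU t)); pose proof (pow2_ge_0 (lV t)); lra. }
  assert (HQa : 0 < lQ a).
  { destruct (lQ_bounds a (Rle_refl a)) as [_ [H _]].
    rewrite lU_lV_energy in H.
    assert (0 < Rpower a (2 * nu + 1) * energy nu a).
    { apply Rmult_lt_0_compat; [apply exp_pos | apply energy_pos, Ha; exact nu_ge0]. }
    lra. }
  assert (Hder : forall s, a <= s ->
            Rabs ((2 * nu + 1) * lU s * lV s / s ^ 2) <= a * lQ s / s ^ 2).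
  { intros s Hs. destruct (lQ_bounds s Hs) as [H [H' _]].
    assert (0 < / s ^ 2) by (apply Rinv_0_lt_compat; nra).
    replace ((2 * nu + 1) * lU s * lV s / s ^ 2) with (a * (lU s * lV s) * / s ^ 2)
      by (unfold a, Rdiv; ring).
    rewrite (Rabs_mult (a * _)), (Rabs_mult a), (Rabs_pos_eq a), (Rabs_pos_eq (/ s ^ 2)) by lra.
    unfold Rdiv; apply Rmult_le_compat_r; [lra|]. apply Rmult_le_compat_l; lra. }
  assert (HQ := bounded_of_derive_le_inv_sq lQ
    (fun s => (2 * nu + 1) * lU s * lV s / s ^ 2) a a Ha (Rlt_le _ _ Ha)
    (fun t Ht => is_derive_lQ t (Rlt_le_trans _ _ _ Ha Ht)) Hpos Hder).
  exists (2 * (lQ a * exp (a / a))), (2 / 3 * (lQ a * exp (- (a / a)))).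
  split; [pose proof (exp_pos (- (a / a))); nra|].
  intros t Ht. destruct (lQ_bounds t Ht) as [_ [Hlo Hhi]].
  destruct (HQ t Ht) as [Hlow Hup].
  pose proof (pow2_ge_0 (lV t)). split; lra.
Qed.

(* On [[s, s + 3/4]] the velocity [lU' = (nu + 1/2) lU / t - lV] cannot be small where [lU] is,
   since [lU^2 + lV^2] stays away from [0]; so [lU] cannot stay small on the whole interval. *)
Lemma lU_not_small : exists d, 0 < d /\ forall s, 2 * nu + 1 <= s ->
  exists x, s <= x <= s + 3 / 4 /\ d <= Rabs (lU x).
Proof.
  destruct lU_bounded_lUV_bounded_below as [C [c [Hc Hbound]]].
  set (d := sqrt c / 5).
  assert (Hd : 0 < d) by (unfold d; pose proof (sqrt_lt_R0 c Hc); lra).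
  assert (Hcd : c = 25 * d ^ 2).
  { unfold d. replace ((sqrt c / 5) ^ 2) with (sqrt c * sqrt c / 25) by field.
    rewrite sqrt_sqrt; lra. }
  exists d; split; [exact Hd|]. intros s Hs.
  apply NNPP; intros Hnot.
  assert (Hsmall : forall x, s <= x <= s + 3 / 4 -> Rabs (lU x) < d).
  { intros x Hx. apply Rnot_le_lt. intros Hle. apply Hnot. exists x; split; assumption. }
  destruct (MVT_cor2 lU (fun x => (nu + 1 / 2) * lU x / x - lV x) s (s + 3 / 4))
    as [t [Hmvt Ht]]; [lra | intros t Ht; apply is_derive_Reals, is_derive_lU; lra |].
  assert (HUt := Hsmall t ltac:(lra)).
  destruct (Hbound t ltac:(lra)) as [_ HUV].
  assert (HV : 4 * d <= Rabs (lV t)).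
  { apply Rabs_def2 in HUt. rewrite <- (Rabs_pos_eq (4 * d)) by lra.
    apply Rsqr_le_abs_0. unfold Rsqr. nra. }
  assert (HU' : Rabs ((nu + 1 / 2) / t * lU t) <= d / 2).
  { assert (0 < (nu + 1 / 2) / t <= 1 / 2).
    { split; [apply Rdiv_lt_0_compat; lra|].
      apply Rmult_le_reg_r with t; [lra|]. unfold Rdiv; rewrite Rmult_assoc, Rinv_l; lra. }
    rewrite Rabs_mult, (Rabs_pos_eq ((nu + 1 / 2) / t)) by lra. nra. }
  assert (Hspeed : 7 / 2 * d <= Rabs ((nu + 1 / 2) * lU t / t - lV t)).
  { replace ((nu + 1 / 2) * lU t / t - lV t) with (- (lV t - (nu + 1 / 2) / t * lU t))
      by (field; lra).
    rewrite Rabs_Ropp. pose proof (Rabs_triang_inv (lV t) ((nu + 1 / 2) / t * lU t)). lra. }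
  assert (Hdiff : Rabs (lU (s + 3 / 4) - lU s) < 2 * d).
  { pose proof (Rabs_triang (lU (s + 3 / 4)) (- lU s)) as Htri. rewrite Rabs_Ropp in Htri.
    pose proof (Hsmall s ltac:(lra)). pose proof (Hsmall (s + 3 / 4) ltac:(lra)).
    unfold Rminus; lra. }
  rewrite Hmvt, Rabs_mult, (Rabs_pos_eq (s + 3 / 4 - s)) in Hdiff by lra. lra.
Qed.

End Liouville_form.

(** * The transform of the indicator *)

(* [d/dx (x^(2 alpha + 2) j_(alpha+1) (lam x)) = (2 alpha + 2) x^(2 alpha + 1) j_alpha (lam x)]. *)
Lemma hat_ind01_jA alpha lam : 1 / 2 <= alpha ->
  hat_ind01 alpha lam = jA (alpha + 1) lam / (2 * alpha + 2).
Proof.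
  intros Ha.
  set (F := fun x => rpow x (2 * alpha + 2) * jser (alpha + 1) ((lam * x) ^ 2) / (2 * alpha + 2)).
  set (f := fun x => rpow x (2 * alpha + 1) * jser alpha ((lam * x) ^ 2)).
  assert (HF : forall x, 0 <= x -> is_derive F x (f x)).
  { intros x Hx. eapply is_derive_eq.
    - apply (is_derive_mult_R _ (fun _ => / (2 * alpha + 2))); [|apply is_derive_const].
      apply is_derive_mult_R; [apply is_derive_rpow; lra|].
      apply (is_derive_comp_R (jser (alpha + 1)) (fun t => (lam * t) ^ 2));
        [apply is_derive_jser; lra | auto_derive; [exact I | reflexivity]].
    - unfold f. pose proof (jser_succ_sub alpha ((lam * x) ^ 2) ltac:(lra)) as Rec.
      replace (alpha + 1 + 1) with (alpha + 2) by ring.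
      rewrite (rpow_pred x (2 * alpha + 2)) by exact Hx.
      replace (2 * alpha + 2 - 1) with (2 * alpha + 1) by ring.
      replace (jser alpha ((lam * x) ^ 2)) with (jser (alpha + 1) ((lam * x) ^ 2)
        - (lam * x) ^ 2 / (4 * (alpha + 1) * (alpha + 2)) * jser (alpha + 2) ((lam * x) ^ 2)) by lra.
      change (@zero _) with 0. field; lra. }
  assert (Hf : forall x, 0 <= x -> continuous f x).
  { intros x Hx. apply (continuous_mult (fun t => rpow t (2 * alpha + 1)));
      [apply continuous_rpow; lra|].
    apply (continuous_comp (fun t => (lam * t) ^ 2) (jser alpha)); [|apply continuous_jser; lra].
    apply (ex_derive_continuous (fun t => (lam * t) ^ 2)). auto_derive; exact I. }
  assert (HI : is_RInt f 0 1 (minus (F 1) (F 0))).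
  { apply (is_RInt_derive F f); intros x Hx; rewrite Rmin_left, Rmax_right in Hx by lra;
      [apply HF | apply Hf]; lra. }
  replace (minus (F 1) (F 0)) with (jA (alpha + 1) lam / (2 * alpha + 2)) in HI.
  - unfold hat_ind01. apply RInt_of_is_RInt. apply (is_RInt_ext f); [|exact HI].
    intros x Hx. rewrite Rmin_left, Rmax_right in Hx by lra. unfold f, ind01, haar_density.
    destruct (Rle_dec 0 x); [|lra]. destruct (Rlt_dec x 1); [|lra].
    rewrite j_alpha_jser by lra. rewrite Rmult_1_l; apply Rmult_comm.
  - unfold F, jA, minus, plus, opp; cbn -[rpow jser pow].
    rewrite rpow_1, (rpow_nonpos 0) by lra. rewrite Rmult_1_r. field; lra.
Qed.

Lemma hat_ind01_abs_le alpha lam : 1 / 2 <= alpha -> Rabs (hat_ind01 alpha lam) <= / (2 * alpha + 2).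
Proof.
  intros Ha. rewrite hat_ind01_jA by exact Ha. unfold jA, Rdiv.
  rewrite Rabs_mult, (Rabs_pos_eq (/ _)) by (left; apply Rinv_0_lt_compat; lra).
  rewrite <- (Rmult_1_l (/ (2 * alpha + 2))) at 2.
  apply Rmult_le_compat_r; [left; apply Rinv_0_lt_compat; lra|].
  apply jser_abs_le_1; [lra | apply pow2_ge_0].
Qed.

Lemma hat_ind01_lU alpha lam : 1 / 2 <= alpha -> 0 < lam ->
  Rabs (hat_ind01 alpha lam)
  = Rabs (lU (alpha + 1) lam) / (2 * alpha + 2) * Rpower lam (- (alpha + 3 / 2)).
Proof.
  intros Ha Hl. rewrite hat_ind01_jA by exact Ha. unfold lU.
  replace (alpha + 1 + 1 / 2) with (alpha + 3 / 2) by lra.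
  pose proof (exp_pos ((alpha + 3 / 2) * ln lam)).
  rewrite Rpower_Ropp, !Rabs_mult, Rabs_div, (Rabs_pos_eq (Rpower _ _)), (Rabs_pos_eq (2 * alpha + 2))
    by (unfold Rpower; lra).
  unfold Rpower; field; lra.
Qed.

Lemma hat_ind01_decay_upper alpha : 1 / 2 <= alpha -> exists K, 0 < K /\
  forall lam, 2 * alpha + 3 <= lam -> Rabs (hat_ind01 alpha lam) <= K * Rpower lam (- (alpha + 3 / 2)).
Proof.
  intros Ha. destruct (lU_bounded_lUV_bounded_below (alpha + 1) ltac:(lra)) as [C [c [_ HC]]].
  exists (sqrt (Rmax C 0) / (2 * alpha + 2) + 1). split.
  { pose proof (sqrt_pos (Rmax C 0)).
    assert (0 <= sqrt (Rmax C 0) / (2 * alpha + 2)) by (apply Rdiv_le_0_compat; lra). lra. }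
  intros lam Hl. rewrite hat_ind01_lU by lra.
  destruct (HC lam ltac:(lra)) as [HU _].
  assert (Rabs (lU (alpha + 1) lam) <= sqrt (Rmax C 0)).
  { rewrite <- sqrt_Rsqr_abs. apply sqrt_le_1; [apply Rle_0_sqr | apply Rmax_r|].
    unfold Rsqr. eapply Rle_trans; [|apply Rmax_l]. simpl in HU; lra. }
  apply Rmult_le_compat_r; [left; apply exp_pos|].
  assert (Rabs (lU (alpha + 1) lam) / (2 * alpha + 2) <= sqrt (Rmax C 0) / (2 * alpha + 2))
    by (apply Rmult_le_compat_r; [left; apply Rinv_0_lt_compat|]; lra).
  lra.
Qed.

Lemma hat_ind01_decay_lower alpha : 1 / 2 <= alpha -> exists d, 0 < d /\
  forall s, 2 * alpha + 3 <= s -> exists lam, s <= lam <= s + 3 / 4 /\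
    d * Rpower lam (- (alpha + 3 / 2)) <= Rabs (hat_ind01 alpha lam).
Proof.
  intros Ha. destruct (lU_not_small (alpha + 1) ltac:(lra)) as [d [Hd Hosc]].
  exists (d / (2 * alpha + 2)). split; [apply Rdiv_lt_0_compat; lra|].
  intros s Hs. destruct (Hosc s ltac:(lra)) as [lam [Hl HU]].
  exists lam; split; [exact Hl|]. rewrite hat_ind01_lU by lra.
  apply Rmult_le_compat_r; [left; apply exp_pos|].
  apply Rmult_le_compat_r; [left; apply Rinv_0_lt_compat; lra | exact HU].
Qed.

(** * The discrete norm *)

Lemma omega_n_bounds alpha n : 1 / 2 <= alpha -> (1 <= n)%nat ->
  rpow (INR n - 1) (2 * alpha + 1) <= omega_n alpha n <= rpow (INR n) (2 * alpha + 1).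
Proof.
  intros Ha Hn. apply le_INR in Hn; simpl in Hn.
  assert (HI : ex_RInt (haar_density alpha) (INR n - 1) (INR n)).
  { apply (ex_RInt_continuous (V := R_CompleteNormedModule)). intros z Hz.
    rewrite Rmin_left, Rmax_right in Hz by lra.
    apply continuous_rpow; lra. }
  destruct HI as [v Hv]. unfold omega_n. rewrite (RInt_of_is_RInt _ _ _ v Hv).
  rewrite <- (is_RInt_unique _ _ _ _ Hv).
  assert (Hconst : forall c : R, RInt (fun _ => c) (INR n - 1) (INR n) = c).
  { intros c. rewrite RInt_const. change (scal ?a ?b) with (a * b).
    replace (INR n - (INR n - 1)) with 1 by ring. apply Rmult_1_l. }
  split.
  - rewrite <- Hconst at 1. apply RInt_le; [lra | apply ex_RInt_const | exists v; exact Hv|].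
    intros x Hx. apply rpow_le_compat; lra.
  - rewrite <- (Hconst (rpow (INR n) _)).
    apply RInt_le; [lra | exists v; exact Hv | apply ex_RInt_const|].
    intros x Hx. apply rpow_le_compat; lra.
Qed.

Lemma omega_n_ge_half alpha n : 1 / 2 <= alpha -> (2 <= n)%nat ->
  Rpower (/ 2) (2 * alpha + 1) * Rpower (INR n) (2 * alpha + 1) <= omega_n alpha n.
Proof.
  intros Ha Hn. apply le_INR in Hn as HnR; simpl in HnR.
  eapply Rle_trans; [|apply omega_n_bounds; [exact Ha | lia]].
  rewrite rpow_pos_eq, Rpower_mult_distr by lra.
  apply Rle_Rpower_l; lra.
Qed.

Lemma sup_set_hat_lub alpha q n : 1 / 2 <= alpha -> 0 <= q ->
  { M | is_lub (sup_set (hat_ind01 alpha) q n) M }.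
Proof.
  intros Ha Hq. apply completeness.
  - exists (rpow (/ (2 * alpha + 2)) q). intros y [lam [_ ->]].
    apply rpow_le_compat; [split; [apply Rabs_pos | apply hat_ind01_abs_le, Ha] | exact Hq].
  - exists (rpow (Rabs (hat_ind01 alpha (INR n - 1 / 2))) q), (INR n - 1 / 2).
    split; [lra | reflexivity].
Qed.

Lemma sup_set_lub_ge0 g q n M : is_lub (sup_set g q n) M -> 0 <= M.
Proof.
  intros [Hub _]. apply Rle_trans with (rpow (Rabs (g (INR n - 1 / 2))) q); [apply rpow_ge0|].
  apply Hub. exists (INR n - 1 / 2). split; [lra | reflexivity].
Qed.

Lemma sup_set_hat_upper alpha q : 1 / 2 <= alpha -> 0 <= q -> exists D N, 0 <= D /\
  forall n, (N <= n)%nat -> forall y, sup_set (hat_ind01 alpha) q n y ->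
    y <= D * Rpower (INR n) (- ((alpha + 3 / 2) * q)).
Proof.
  intros Ha Hq. destruct (hat_ind01_decay_upper alpha Ha) as [K [HK Hdecay]].
  set (m := alpha + 3 / 2).
  destruct (exists_nat_ge (2 * alpha + 4)) as [N [HN2 HN]].
  exists (Rpower (K * Rpower 2 m) q), N. split; [left; apply exp_pos|].
  intros n Hn y [lam [Hl ->]].
  apply le_INR in Hn, HN2. simpl in HN2.
  assert (Hlam : Rabs (hat_ind01 alpha lam) <= K * Rpower 2 m * Rpower (INR n) (- m)).
  { eapply Rle_trans; [apply Hdecay; lra|].
    rewrite Rmult_assoc, <- Rpower_half_neg by lra. apply Rmult_le_compat_l; [lra|].
    rewrite !Rpower_Ropp. apply Rinv_le_contravar; [apply exp_pos | apply Rle_Rpower_l; lra]. }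
  eapply Rle_trans; [apply rpow_le_compat; [split; [apply Rabs_pos | exact Hlam] | exact Hq]|].
  rewrite rpow_mult_Rpower by (try (apply Rmult_lt_0_compat; [exact HK | apply exp_pos]); lra).
  replace (- m * q) with (- (m * q)) by ring. lra.
Qed.

Lemma sup_set_hat_lower alpha q : 1 / 2 <= alpha -> 0 <= q -> exists c N, 0 < c /\ (1 <= N)%nat /\
  forall n, (N <= n)%nat -> exists y, sup_set (hat_ind01 alpha) q n y /\
    c * Rpower (INR n) (- ((alpha + 3 / 2) * q)) <= y.
Proof.
  intros Ha Hq. destruct (hat_ind01_decay_lower alpha Ha) as [d [Hd Hdecay]].
  set (m := alpha + 3 / 2). assert (Hm : 0 <= m) by (unfold m; lra).
  destruct (exists_nat_ge (2 * alpha + 4)) as [N [HN2 HN]].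
  exists (Rpower d q), N. split; [apply exp_pos | split; [lia|]].
  intros n Hn. apply le_INR in Hn.
  destruct (Hdecay (INR n - 1) ltac:(lra)) as [lam [Hl Hlam]].
  exists (rpow (Rabs (hat_ind01 alpha lam)) q). split; [exists lam; split; [lra | reflexivity]|].
  replace (- (m * q)) with (- m * q) by ring. rewrite <- rpow_mult_Rpower by lra.
  apply rpow_le_compat; [|exact Hq]. split; [apply Rmult_le_pos; [lra | left; apply exp_pos]|].
  eapply Rle_trans; [|exact Hlam]. apply Rmult_le_compat_l; [lra|].
  rewrite !Rpower_Ropp. apply Rinv_le_contravar; [apply exp_pos | apply Rle_Rpower_l; lra].
Qed.

Lemma threshold_iff alpha q : 0 <= alpha ->
  1 < (alpha + 3 / 2) * q - (2 * alpha + 1) <-> q > 2 * (alpha + 1) / (alpha + 3 / 2).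
Proof.
  intros Ha. assert (E : 2 * (alpha + 1) / (alpha + 3 / 2) * (alpha + 3 / 2) = 2 * (alpha + 1))
    by (field; lra).
  split; intros H.
  - apply Rmult_lt_reg_r with (alpha + 3 / 2); [lra|]. rewrite E; nra.
  - apply (Rmult_lt_compat_r (alpha + 3 / 2)) in H; [|lra]. rewrite E in H; nra.
Qed.

Lemma finite_Linf_lq_hat_ind01 alpha q : 1 / 2 <= alpha -> 0 <= q ->
  1 < (alpha + 3 / 2) * q - (2 * alpha + 1) -> finite_Linf_lq alpha q (hat_ind01 alpha).
Proof.
  intros Ha Hq Hs. set (s := (alpha + 3 / 2) * q - (2 * alpha + 1)) in Hs.
  set (M := fun n => proj1_sig (sup_set_hat_lub alpha q n Ha Hq)).
  assert (HM : forall n, is_lub (sup_set (hat_ind01 alpha) q n) (M n))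
    by (intros n; exact (proj2_sig (sup_set_hat_lub alpha q n Ha Hq))).
  exists M. split; [intros n _; apply HM|].
  destruct (sup_set_hat_upper alpha q Ha Hq) as [D [N [HD Hup]]].
  cut (ex_series (fun k => omega_n alpha (S k) * M (S k))).
  { intros [l Hl]. exists l. apply is_series_Reals, Hl. }
  apply (ex_series_incr_n _ N).
  apply (@ex_series_le R_AbsRing R_CompleteNormedModule _ (fun k => D * Rpower (INR (N + k) + 1) (- s))).
  - intros k. change (norm ?x) with (Rabs x).
    destruct (omega_n_bounds alpha (S (N + k)) Ha ltac:(lia)) as [Hlo Hhi].
    pose proof (rpow_ge0 (INR (S (N + k)) - 1) (2 * alpha + 1)).
    pose proof (sup_set_lub_ge0 _ _ _ _ (HM (S (N + k)))).
    assert (HMle : M (S (N + k)) <= D * Rpower (INR (S (N + k))) (- ((alpha + 3 / 2) * q)))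
      by (apply (proj2 (HM _)); intros y Hy; apply (Hup (S (N + k)) ltac:(lia) y Hy)).
    rewrite S_INR in *. pose proof (pos_INR (N + k)).
    rewrite rpow_pos_eq in Hhi by lra.
    rewrite Rabs_pos_eq by (apply Rmult_le_pos; lra).
    eapply Rle_trans; [apply Rmult_le_compat; [lra | lra | exact Hhi | exact HMle]|].
    replace (- s) with ((2 * alpha + 1) + - ((alpha + 3 / 2) * q)) by (unfold s; ring).
    rewrite (Rpower_plus (2 * alpha + 1)). right; ring.
  - apply (ex_series_scal D (fun k => Rpower (INR (N + k) + 1) (- s))).
    apply (ex_series_incr_n (fun k => Rpower (INR k + 1) (- s))), ex_series_Rpower_neg, Hs.
Qed.

Lemma gt_threshold_of_finite_Linf_lq alpha q : 1 / 2 <= alpha -> 0 <= q ->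
  finite_Linf_lq alpha q (hat_ind01 alpha) -> 1 < (alpha + 3 / 2) * q - (2 * alpha + 1).
Proof.
  intros Ha Hq [M [HM [l Hl]]]. apply Rnot_le_lt; intros Hs.
  destruct (sup_set_hat_lower alpha q Ha Hq) as [c [N [Hc [HN Hlow]]]].
  set (c' := c * Rpower (/ 2) (2 * alpha + 1)).
  assert (Hc' : 0 < c') by (apply Rmult_lt_0_compat; [exact Hc | apply exp_pos]).
  apply harmonic_not_ex_series, (ex_series_incr_n _ N).
  apply (@ex_series_le R_AbsRing R_CompleteNormedModule _
    (fun k => / c' * (omega_n alpha (S (N + k)) * M (S (N + k))))).
  - intros k. change (norm ?x) with (Rabs x).
    pose proof (pos_INR (N + k)).
    rewrite Rabs_pos_eq by (left; apply Rinv_0_lt_compat; lra).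
    destruct (Hlow (S (N + k)) ltac:(lia)) as [y [Hy Hcy]].
    assert (HyM : y <= M (S (N + k))) by (apply (proj1 (HM (S (N + k)) ltac:(lia))), Hy).
    pose proof (omega_n_ge_half alpha (S (N + k)) Ha ltac:(lia)) as Homega.
    rewrite S_INR in *.
    assert (Hn1 : 1 <= INR (N + k) + 1) by lra.
    set (n := INR (N + k) + 1) in *.
    assert (Hpow : / n <= Rpower n (2 * alpha + 1) * Rpower n (- ((alpha + 3 / 2) * q))).
    { rewrite <- Rpower_plus, <- (Rpower_1 n) at 1 by lra. rewrite <- Rpower_Ropp.
      apply Rle_Rpower; lra. }
    apply Rmult_le_reg_l with c'; [exact Hc'|]. rewrite <- Rmult_assoc, Rinv_r, Rmult_1_l by lra.
    eapply Rle_trans; [apply Rmult_le_compat_l; [lra | exact Hpow]|].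
    unfold c'. eapply Rle_trans;
      [|apply Rmult_le_compat; [| |exact Homega | eapply Rle_trans; [exact Hcy | exact HyM]]].
    + right; ring.
    + apply Rmult_le_pos; left; apply exp_pos.
    + apply Rmult_le_pos; [lra | left; apply exp_pos].
  - apply (ex_series_scal (/ c') (fun k => omega_n alpha (S (N + k)) * M (S (N + k)))).
    apply (ex_series_incr_n (fun k => omega_n alpha (S k) * M (S k))).
    exists l. apply is_series_Reals, Hl.
Qed.

Theorem mainTheorem10 (alpha q : R) :
  1 / 2 <= alpha -> 1 <= q ->
  (finite_Linf_lq alpha q (hat_ind01 alpha) <->
     q > 2 * (alpha + 1) / (alpha + 3 / 2)) /\
  finite_Linf_lq alpha 2 (hat_ind01 alpha).
Proof.
  intros Ha Hq. split.
  - rewrite <- threshold_iff by lra. split.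
    + apply gt_threshold_of_finite_Linf_lq; lra.
    + apply finite_Linf_lq_hat_ind01; lra.
  - apply finite_Linf_lq_hat_ind01; lra.
Qed.
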